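(* Let $\Bbbk$ be a field of characteristic zero, $\lambda\in\Bbbk^*$, and $s_\lambda=t+\lambda t^{-1}$. Then $$\mathcal O(\lambda)=L(s_\lambda)=\Bbbk[t+\lambda t^{-1}](t^2-\lambda)\partial=\Bbbk[s_\lambda](s_\lambda^2-4\lambda)\partial_{s_\lambda}\cong(t^2-4\lambda)\Bbbk[t]\partial,$$ where the isomorphism is induced by the change of variables $s_\lambda\mapsto t$. Consequently $\mathcal O(\lambda)$ has a basis $\{u^{(\lambda)}_n\mid n\ge1\}$, where $u^{(\lambda)}_n=-s_\lambda^{n-1}(s_\lambda^2-4\lambda)\partial_{s_\lambda}=-(t+\lambda t^{-1})^{n-1}(t^2-\lambda)\partial$, and $[u^{(\lambda)}_n,u^{(\lambda)}_m]=(n-m)(u^{(\lambda)}_{n+m}-4\lambda u^{(\lambda)}_{n+m-2})$ for all $n,m\ge1$.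
   Context: $\mathcal W=\Bbbk[t,t^{-1}]\partial$ with $\partial=d/dt$ is the Witt algebra, $L_n=-t^{n+1}\partial$, $[f\partial,g\partial]=(fg'-f'g)\partial$. For $\lambda\in\Bbbk^*$, $\mathcal O^{(\lambda)}_n=L_n-\lambda^nL_{-n}$ and $\mathcal O(\lambda)=\mathrm{span}\{\mathcal O^{(\lambda)}_n\mid n\ge1\}\subseteq\mathcal W$. For $s\in\Bbbk[t,t^{-1}]$ nonconstant, $\partial_s=\frac{1}{s'}\partial\in\mathrm{Der}(\Bbbk(t))$ (so $\partial_s(s)=1$), $\mathrm{Der}(\Bbbk[s])=\Bbbk[s]\partial_s$, and $L(s)=\mathcal W\cap\mathrm{Der}(\Bbbk[s])$, the intersection taken in $\mathrm{Der}(\Bbbk(t))$. $\Bbbk[t]\partial$ is the one-sided Witt algebra $\mathrm{Der}(\Bbbk[t])$. *)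

From HB Require Import structures.
From mathcomp Require Import all_boot all_order all_algebra.
Set Implicit Arguments. Unset Strict Implicit. Unset Printing Implicit Defensive.
Import Order.TTheory GRing.Theory Num.Theory.
Local Open Scope ring_scope.

(* A derivation of k(t) is  f * d/dt  with f in k(t); we identify
   the vector field f d/dt with its coefficient f in the rational function
   field  RF K := {fraction {poly K}}  (so W, Der(k[s]) etc. are subsets of RF K). *)

Notation RF K := {fraction {poly K}}.

Section Defs.
Variable K : fieldType.

Definition kc (c : K) : RF K := tofrac (c%:P).
Definition tt : RF K := tofrac 'X.

Definition Dt (f : RF K) : RF K :=
  let r := repr f in
  tofrac ((\n_r)^`() * \d_r - \n_r * (\d_r)^`()) / tofrac (\d_r ^+ 2).

(* Lie bracket of vector fields: [f d, g d] = (f g' - f' g) d *)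
Definition wbr (f g : RF K) : RF K := f * Dt g - Dt f * g.

Definition in_W (f : RF K) : Prop :=
  exists (p : {poly K}) (n : nat), f = tofrac p / tt ^+ n.

Definition peval (g : {poly K}) (s : RF K) : RF K := (map_poly kc g).[s].

(* f d/dt lies in Der(k[s]) = k[s] d_s, where d_s = (1/s') d/dt *)
Definition in_Der_poly (s f : RF K) : Prop :=
  exists g : {poly K}, f = peval g s / Dt s.

Definition in_Ls (s f : RF K) : Prop := in_W f /\ in_Der_poly s f.

Definition Lw (n : int) : RF K := - tt ^ (n + 1).

Definition Ow (lam : K) (n : nat) : RF K := Lw n - kc (lam ^+ n) * Lw (- n%:Z).

Definition in_O (lam : K) (f : RF K) : Prop :=
  exists (N : nat) (c : nat -> K), f = \sum_(1 <= n < N) kc (c n) * Ow lam n.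

Definition slam (lam : K) : RF K := tt + kc lam / tt.

Definition uw (lam : K) (n : nat) : RF K :=
  - (slam lam ^ (n%:Z - 1)) * (tt ^+ 2 - kc lam).

Definition cov (lam : K) (g : {poly K}) : RF K := peval g (slam lam) / Dt (slam lam).

End Defs.

(* Write s = t + lam/t and Q = t^2 - lam, so that s' = Q/t^2 and s^2 - 4 lam = Q s'.
   Since t^(n+1) - (lam/t)^(n+1) = (t - lam/t) E_n(s) for the monic Dickson polynomials E_n
   of the second kind, O_(n+1) = -E_n(s) Q; hence O(lam) is the k[s]-module k[s] Q, which is
   also spanned by u_(n+1) = -s^n Q.  Multiplying g(s) by t^(deg g) gives a polynomial in t with
   constant term lead(g) lam^(deg g): so s is transcendental and k[s] Q lies in W.  Conversely,
   if g(s)/s' lies in W, dividing g by X^2 - 4 lam writes it as h(s) Q + (a s + b)/s', and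
   (a s + b)/s' = t (a t^2 + b t + a lam)/Q lies in W only if a = b = 0 (when 2 != 0).  Finally
   g |-> g(s)/s' is an injective Lie morphism from k[t] d/dt sending -X^n (X^2 - 4 lam) to
   u_(n+1), which reduces the bracket relations to a computation with polynomials. *)

From HB Require Import structures.
From mathcomp Require Import all_boot all_order all_algebra.
From mathcomp Require Import ring.
Import Order.TTheory GRing.Theory Num.Theory.
Set Implicit Arguments. Unset Strict Implicit. Unset Printing Implicit Defensive.
Local Open Scope ring_scope.
Local Open Scope quotient_scope.
Local Notation "x %:F" := (@tofrac _ x).

Section QuotientRule.
Variable F : fieldType.

Lemma quotient_ruleD {b d : F} (b0 : b != 0) (d0 : d != 0) (a a' b' c c' d' : F) :
  ((a' * d + a * d' + (c' * b + c * b')) * (b * d) - (a * d + c * b) * (b' * d + b * d'))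
    / (b * d) ^+ 2
  = (a' * b - a * b') / b ^+ 2 + (c' * d - c * d') / d ^+ 2.
Proof. by field; rewrite b0 d0. Qed.

Lemma quotient_ruleM {b d : F} (b0 : b != 0) (d0 : d != 0) (a a' b' c c' d' : F) :
  ((a' * c + a * c') * (b * d) - (a * c) * (b' * d + b * d')) / (b * d) ^+ 2
  = (a' * b - a * b') / b ^+ 2 * (c / d) + a / b * ((c' * d - c * d') / d ^+ 2).
Proof. by field; rewrite b0 d0. Qed.

End QuotientRule.

Section Derivation.
Variable K : fieldType.
Implicit Types (p q : {poly K}) (f g : RF K).

Lemma frac_numden f : f = (\n_(repr f))%:F / (\d_(repr f))%:F.
Proof.
have d0 := denom_ratioP (repr f).
apply: (canRL (mulfK _)); first by rewrite tofrac_eq0.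
rewrite -{1}[f]reprK /tofrac -!lock.
rewrite [LHS](_ : _ = \pi_(RF K) (FracField.mulf (repr f) (Ratio \d_(repr f) 1)));
  last by rewrite FracField.pi_mul.
apply/eqmodP => /=.
rewrite FracField.equivfE /FracField.mulf !numden_Ratio ?mulf_neq0 ?oner_neq0 //.
by rewrite !mulr1 mulrC.
Qed.

Lemma fracP f : exists p q, q != 0 /\ f = p%:F / q%:F.
Proof. by exists \n_(repr f), \d_(repr f); split; [exact: denom_ratioP | exact: frac_numden]. Qed.

Lemma Dt_frac p q : q != 0 ->
  Dt (p%:F / q%:F) = ((p^`())%:F * q%:F - p%:F * (q^`())%:F) / q%:F ^+ 2.
Proof.
move=> q0; rewrite /Dt; set f := p%:F / q%:F.
move: (frac_numden f) (denom_ratioP (repr f)).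
set n := \n_(repr f); set d := \d_(repr f) => fE d0.
have nq : n * q = p * d.
  apply/eqP; rewrite -tofrac_eq !tofracM -[_ == _](@eqr_div _ _ d%:F) ?tofrac_eq0 //.
  by rewrite -fE.
have nq' : n^`() * q + n * q^`() = p^`() * d + p * d^`() by rewrite -!derivM nq.
rewrite -!tofracM -tofracB -tofracXn.
apply/eqP; rewrite eqr_div ?tofrac_eq0 ?expf_neq0 // -!tofracM tofrac_eq; apply/eqP.
have -> : (n^`() * d - n * d^`()) * q ^+ 2 =
  d * q * (n^`() * q + n * q^`()) - (d^`() * q + q^`() * d) * (n * q) by ring.
by rewrite nq nq'; ring.
Qed.

Lemma Dt_tofrac p : Dt p%:F = (p^`())%:F.
Proof.
rewrite -[p%:F]divr1 -tofrac1 Dt_frac ?oner_neq0 // derivC.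
by rewrite !tofrac1 tofrac0 !mulr1 mulr0 subr0 expr1n divr1.
Qed.

Lemma DtD f g : Dt (f + g) = Dt f + Dt g.
Proof.
have [a [b [b0 ->]]] := fracP f; have [c [d [d0 ->]]] := fracP g.
have b0' : b%:F != 0 by rewrite tofrac_eq0.
have d0' : d%:F != 0 by rewrite tofrac_eq0.
rewrite (addf_div _ _ b0' d0') -!tofracM -tofracD.
rewrite (Dt_frac _ b0) (Dt_frac _ d0) (Dt_frac _ (mulf_neq0 b0 d0)).
by rewrite derivD !derivM !tofracD !tofracM (quotient_ruleD b0' d0').
Qed.

Lemma DtM f g : Dt (f * g) = Dt f * g + f * Dt g.
Proof.
have [a [b [b0 ->]]] := fracP f; have [c [d [d0 ->]]] := fracP g.
have b0' : b%:F != 0 by rewrite tofrac_eq0.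
have d0' : d%:F != 0 by rewrite tofrac_eq0.
rewrite mulf_div -!tofracM.
rewrite (Dt_frac _ b0) (Dt_frac _ d0) (Dt_frac _ (mulf_neq0 b0 d0)).
by rewrite !derivM !tofracD !tofracM (quotient_ruleM b0' d0').
Qed.
End Derivation.

Section Evaluation.
Variable K : fieldType.
Implicit Types (c : K) (p q : {poly K}) (s f g : RF K).

HB.instance Definition _ := GRing.RMorphism.copy (@kc K) (@tofrac {poly K} \o (@polyC K)).

Lemma pevalD p q s : peval (p + q) s = peval p s + peval q s.
Proof. by rewrite /peval rmorphD hornerD. Qed.

Lemma pevalN p s : peval (- p) s = - peval p s.
Proof. by rewrite /peval rmorphN hornerN. Qed.

Lemma pevalM p q s : peval (p * q) s = peval p s * peval q s.
Proof. by rewrite /peval rmorphM hornerM. Qed.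

Lemma pevalC c s : peval c%:P s = kc c.
Proof. by rewrite /peval map_polyC hornerC. Qed.

Lemma pevalX s : peval 'X s = s.
Proof. by rewrite /peval map_polyX hornerX. Qed.

Lemma pevalXn n s : peval 'X^n s = s ^+ n.
Proof. by rewrite /peval map_polyXn hornerXn. Qed.

Lemma pevalZ c p s : peval (c *: p) s = kc c * peval p s.
Proof. by rewrite -mul_polyC pevalM pevalC. Qed.

Lemma peval_sum (I : Type) (r : seq I) (P : pred I) (G : I -> {poly K}) s :
  peval (\sum_(i <- r | P i) G i) s = \sum_(i <- r | P i) peval (G i) s.
Proof. by rewrite /peval rmorph_sum horner_sum. Qed.

Lemma Dt_kc c : Dt (kc c) = 0.
Proof. by rewrite Dt_tofrac derivC tofrac0. Qed.

Lemma Dt_tt : Dt (tt K) = 1.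
Proof. by rewrite Dt_tofrac derivX tofrac1. Qed.

Lemma Dt_peval p s : Dt (peval p s) = peval p^`() s * Dt s.
Proof.
elim/poly_ind: p => [|p c IHp].
  by rewrite deriv0 /peval !rmorph0 horner0 mul0r -tofrac0 Dt_tofrac deriv0.
rewrite derivMXaddC !pevalD !pevalM pevalX pevalC DtD Dt_kc DtM IHp.
by ring.
Qed.

Lemma wbr_peval_div p q s :
  wbr (peval p s / Dt s) (peval q s / Dt s) = peval (p * q^`() - p^`() * q) s / Dt s.
Proof.
have [->|Ds0] := eqVneq (Dt s) 0; first by rewrite /wbr !invr0 !mulr0 mul0r subrr.
rewrite /wbr !DtM !Dt_peval !(mulfK Ds0) pevalD pevalN !pevalM.
by ring.
Qed.

Lemma tt_neq0 : tt K != 0.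
Proof. by rewrite tofrac_eq0 polyX_eq0. Qed.

Lemma ttXn n : tt K ^+ n = ('X^n)%:F.
Proof. by rewrite rmorphXn. Qed.

Lemma in_WB f g : in_W f -> in_W g -> in_W (f - g).
Proof.
move=> [p [n ->]] [q [m ->]]; exists (p * 'X^m - q * 'X^n), (n + m)%N.
have [Xn0 Xm0] : tt K ^+ n != 0 /\ tt K ^+ m != 0 by split; apply: expf_neq0 tt_neq0.
rewrite -mulNr (addf_div _ _ Xn0 Xm0) -exprD !ttXn.
by rewrite tofracB !tofracM mulNr.
Qed.

Lemma in_W_dvdp (r d : {poly K}) m : d.[0] != 0 -> in_W (r%:F / d%:F * tt K ^+ m) -> d %| r.
Proof.
move=> d00 [p [n E]].
have d0 : d != 0 by apply: contraNneq d00 => ->; rewrite horner0.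
have d0' : d%:F != 0 by rewrite tofrac_eq0.
have Xn0 : ('X^n : {poly K})%:F != 0 by rewrite tofrac_eq0 monic_neq0 ?monicXn.
have : (r * 'X^m * 'X^n) = p * d.
  apply/eqP; rewrite -tofrac_eq !tofracM -(eqr_div _ _ d0' Xn0).
  by rewrite mulrAC -ttXn E ttXn.
have cop : coprimep d 'X^(m + n) by rewrite coprimep_expr // coprimepX /root d00.
by rewrite -mulrA -exprD => rX; rewrite -(Gauss_dvdpl _ cop) rX dvdp_mull.
Qed.
End Evaluation.

Section MonicFamily.
Variable R : nzRingType.
Implicit Types p q : {poly R}.

Lemma size_sub_lead_monic p q : p \is monic -> size p = size q -> (0 < size q)%N ->
  (size (q - lead_coef q *: p)%R < size q)%N.
Proof.
move=> mon_p sz_pq /prednK sz_q; rewrite -sz_q ltnS; apply/leq_sizeP => j.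
rewrite leq_eqVlt => /orP [/eqP <-|lt_j]; rewrite coefB coefZ.
  have -> : p`_(size q).-1 = 1 by rewrite -sz_pq; exact: eqP mon_p.
  by rewrite mulr1 subrr.
by rewrite !nth_default ?mulr0 ?subrr // ?sz_pq -sz_q.
Qed.

Lemma monic_family_span (P : nat -> {poly R}) :
  (forall n, P n \is monic /\ size (P n) = n.+1) ->
  forall q N, (size q <= N)%N -> exists c : nat -> R, q = \sum_(n < N) c n *: P n.
Proof.
move=> hP q N; have [m] := ubnP (size q); elim: m q => // m IHm q /ltnSE sz_q sz_qN.
have [->|q0] := eqVneq q 0; first by exists (fun=> 0); rewrite big1 // => n _; rewrite scale0r.
have [d sz_d] : exists d, size q = d.+1 by exists (size q).-1; rewrite prednK // size_poly_gt0.
have [mon_d sz_Pd] := hP d.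
have lt_q' : (size (q - lead_coef q *: P d)%R < size q)%N.
  by apply: size_sub_lead_monic; rewrite ?sz_Pd ?sz_d.
have [c qE] := IHm _ (leq_trans lt_q' sz_q) (leq_trans (ltnW lt_q') sz_qN).
exists (fun n => c n + (if n == d then lead_coef q else 0)).
under eq_bigr do rewrite scalerDl.
rewrite big_split /= -qE.
under [X in _ + X]eq_bigr do rewrite (fun_if (fun a => a *: _)) scale0r.
rewrite -big_mkcond /= (big_ord1_eq _ (fun n => lead_coef q *: P n)).
have -> : (d < N)%N by rewrite -ltnS -sz_d ltnS.
by rewrite subrK.
Qed.
End MonicFamily.

Lemma mulX_derivXn (R : nzRingType) n : 'X * ('X^n)^`() = n%:R * 'X^n :> {poly R}.
Proof. by case: n => [|n]; rewrite derivXn ?mulr0n ?mulr0 ?mul0r // mulrnAr -exprS mulr_natl. Qed.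

(* Multiplying by X turns the derivatives of the monomials into multiples of them. *)
Lemma deriv_bracket_Xn (R : idomainType) (P : {poly R}) a b c : (a + b = c.+1)%N ->
  'X^a * P * ('X^b * P)^`() - ('X^a * P)^`() * ('X^b * P) = (b%:R - a%:R) * 'X^c * P ^+ 2.
Proof.
move=> ab; apply: (mulfI (negbT (polyX_eq0 R))).
have -> : 'X * ('X^a * P * ('X^b * P)^`() - ('X^a * P)^`() * ('X^b * P)) =
    P ^+ 2 * ('X^a * ('X * ('X^b)^`()) - 'X * ('X^a)^`() * 'X^b) by rewrite !derivM; ring.
have Xab : 'X^a * 'X^b = 'X * 'X^c :> {poly R} by rewrite -exprD ab exprS.
rewrite !mulX_derivXn; transitivity (P ^+ 2 * (b%:R - a%:R) * ('X^a * 'X^b)); first by ring.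
by rewrite Xab; ring.
Qed.

Lemma subrXX_rec (R : comNzRingType) (x y : R) n :
  x ^+ n.+2 - y ^+ n.+2 = (x + y) * (x ^+ n.+1 - y ^+ n.+1) - x * y * (x ^+ n - y ^+ n).
Proof. by rewrite !exprS; ring. Qed.

Lemma joukowski_sqr_sub4 (F : fieldType) (x l : F) : x != 0 ->
  (x + l / x) ^+ 2 - 4%:R * l = (x ^+ 2 - l) * ((x ^+ 2 - l) / x ^+ 2).
Proof. by move=> x0; field; rewrite x0. Qed.

Section Slam.
Variables (K : fieldType) (lam : K).
Hypothesis lam0 : lam != 0.
Implicit Types (p q : {poly K}) (f : RF K).

Local Notation s := (slam lam).
Local Notation t := (tt K).
Local Notation Q := (tt K ^+ 2 - kc lam).
Local Notation q2 := ('X^2 - lam%:P : {poly K}).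
Local Notation d4 := ('X^2 - (4%:R * lam)%:P : {poly K}).

Lemma Q_tofrac : Q = q2%:F.
Proof. by rewrite tofracB -ttXn. Qed.

Lemma Q_neq0 : Q != 0.
Proof. by rewrite Q_tofrac tofrac_eq0 -size_poly_eq0 size_XnsubC. Qed.

Lemma slam_mul_tt : s * t = t ^+ 2 + kc lam.
Proof. by rewrite mulrDl divfK ?tt_neq0 // expr2. Qed.

Lemma Dt_slam : Dt s = Q / t ^+ 2.
Proof.
rewrite DtD Dt_tt (Dt_frac _ (negbT (polyX_eq0 K))) derivC derivX tofrac0 tofrac1 mul0r mulr1 sub0r.
by rewrite mulrBl divff ?expf_neq0 ?tt_neq0 // mulNr.
Qed.

Lemma Dt_slam_neq0 : Dt s != 0.
Proof. by rewrite Dt_slam; exact: mulf_neq0 Q_neq0 (invr_neq0 (expf_neq0 2 (tt_neq0 K))). Qed.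

Lemma slam_sqr_sub4 : s ^+ 2 - kc (4%:R * lam) = Q * Dt s.
Proof. by rewrite rmorphM rmorph_nat (joukowski_sqr_sub4 _ (tt_neq0 K)) Dt_slam. Qed.

Lemma mul_sqr_sub4_div x : x * (s ^+ 2 - kc (4%:R * lam)) / Dt s = x * Q.
Proof. by rewrite slam_sqr_sub4 mulrA (mulfK Dt_slam_neq0). Qed.

Lemma peval_d4 : peval d4 s = s ^+ 2 - kc (4%:R * lam).
Proof. by rewrite pevalD pevalN pevalXn pevalC. Qed.

Lemma cov_mul_d4 q : cov lam (q * d4) = peval q s * Q.
Proof. by rewrite /cov pevalM peval_d4 mul_sqr_sub4_div. Qed.

Lemma slam_laurent p : exists H : {poly K},
  H%:F = t ^+ (size p).-1 * peval p s /\ H.[0] = lead_coef p * lam ^+ (size p).-1.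
Proof.
elim/poly_ind: p => [|p c [H [HE H0]]].
  by exists 0; rewrite tofrac0 /peval map_poly0 !horner0 mulr0 lead_coef0 mul0r.
have [->|p0] := eqVneq p 0.
  exists c%:P; rewrite mul0r add0r pevalC hornerC lead_coefC size_polyC.
  by case: (c != 0); rewrite /= expr0 ?mul1r ?mulr1.
have [k sz_p] : exists k, size p = k.+1 by exists (size p).-1; rewrite prednK // size_poly_gt0.
rewrite size_MXaddC (negPf p0) sz_p /=.
exists (H * ('X^2 + lam%:P) + c *: 'X^(k.+1)); split.
  rewrite tofracD tofracM HE sz_p -mul_polyC tofracM -ttXn tofracD -ttXn.
  rewrite pevalD pevalM pevalX pevalC -[(lam%:P)%:F]/(kc lam) -[(c%:P)%:F]/(kc c) -slam_mul_tt.
  by rewrite exprS; ring.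
rewrite hornerD hornerM H0 sz_p hornerZ hornerXn expr0n mulr0 addr0.
rewrite hornerD hornerXn hornerC expr0n add0r /= lead_coefDl ?lead_coefMX.
  by rewrite exprSr mulrA.
by rewrite size_mulX // sz_p (leq_ltn_trans (size_polyC_leq1 c)).
Qed.

Lemma peval_slam_eq0 p : (peval p s == 0) = (p == 0).
Proof.
have [->|p0] := eqVneq p 0; first by rewrite /peval map_poly0 horner0 !eqxx.
have [H [HE H0]] := slam_laurent p.
apply/negbTE/eqP => ps0.
have H_eq0 : H = 0 by apply/eqP; rewrite -tofrac_eq0 HE ps0 mulr0 eqxx.
move/eqP: H0; rewrite H_eq0 horner0 eq_sym mulf_eq0 lead_coef_eq0 (negPf p0).
by rewrite expf_eq0 (negPf lam0) andbF.
Qed.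

Fixpoint dickson2 n : {poly K} :=
  match n with
  | 0 => 1
  | 1 => 'X
  | (m.+1 as k).+1 => 'X * dickson2 k - lam%:P * dickson2 m
  end.

Lemma dickson2SS n : dickson2 n.+2 = 'X * dickson2 n.+1 - lam%:P * dickson2 n.
Proof. by []. Qed.

Lemma dickson2_monic_size n : dickson2 n \is monic /\ size (dickson2 n) = n.+1.
Proof.
elim/ltn_ind: n => -[|[|n]] IH; first by rewrite monic1 size_poly1.
  by rewrite monicX size_polyX.
have [mon1 sz1] := IH n.+1 (ltnSn _); have [_ sz0] := IH n (leqnSn _).
have XD_monic : 'X * dickson2 n.+1 \is monic by rewrite monicMl ?monicX.
have sz_XD : size ('X * dickson2 n.+1) = n.+3 by rewrite mulrC size_mulX ?sz1 // monic_neq0.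
have lt_lamD : (size (- (lam%:P * dickson2 n))%R < size ('X * dickson2 n.+1)%R)%N.
  by rewrite size_polyN mul_polyC sz_XD (leq_ltn_trans (size_scale_leq _ _)) // sz0.
by rewrite dickson2SS monicE lead_coefDl // -monicE XD_monic size_polyDl // sz_XD.
Qed.

Lemma dickson2_subrXX n :
  t ^+ n.+1 - (kc lam / t) ^+ n.+1 = (t - kc lam / t) * peval (dickson2 n) s.
Proof.
have ty : t * (kc lam / t) = kc lam by rewrite mulrC divfK ?tt_neq0.
rewrite /slam; move: (kc lam / t) ty => y ty.
elim/ltn_ind: n => -[|[|n]] IH.
- by rewrite /peval rmorph1 hornerC mulr1 !expr1.
- by rewrite pevalX; ring.
rewrite dickson2SS pevalD pevalN !pevalM pevalX pevalC subrXX_rec !IH // -ty.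
by ring.
Qed.

Lemma Ow_dickson2 n : Ow lam n.+1 = - peval (dickson2 n) s * Q.
Proof.
have QE : Q = t * (t - kc lam / t) by rewrite mulrBr mulrCA (divff (tt_neq0 K)) mulr1 expr2.
rewrite /Ow /Lw.
have -> : (n.+1%:Z + 1 = n.+2%:Z)%R by rewrite -PoszD addn1.
have -> : (- n.+1%:Z + 1 = - n%:Z)%R by rewrite -addn1 PoszD opprD addrNK.
rewrite -exprnN -exprnP rmorphXn QE.
have tV : t * (kc lam ^+ n.+1 / t ^+ n.+1) = kc lam ^+ n.+1 / t ^+ n.
  by rewrite [t ^+ n.+1]exprS invfM mulrCA (mulVKf (tt_neq0 K)).
transitivity (- t * (t ^+ n.+1 - (kc lam / t) ^+ n.+1)).
  by rewrite expr_div_n mulrBr !mulNr tV exprS; ring.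
by rewrite dickson2_subrXX; ring.
Qed.

Lemma uw_Xn n : uw lam n.+1 = - s ^+ n * Q.
Proof. by rewrite /uw -addn1 PoszD addrK exprnP. Qed.

Definition in_ksQ f := exists q, f = peval q s * Q.

Lemma sum_peval_Q (F : nat -> RF K) (P : nat -> {poly K}) N (c : nat -> K) :
  (forall n, F n.+1 = - peval (P n) s * Q) ->
  \sum_(1 <= n < N) kc (c n) * F n = peval (- \sum_(n < N.-1) c n.+1 *: P n) s * Q.
Proof.
move=> FE; rewrite big_add1 big_mkord pevalN peval_sum mulNr mulr_suml -sumrN.
by apply: eq_bigr => n _; rewrite FE pevalZ; ring.
Qed.

Lemma span_ksQ (F : nat -> RF K) (P : nat -> {poly K}) :
  (forall n, P n \is monic /\ size (P n) = n.+1) ->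
  (forall n, F n.+1 = - peval (P n) s * Q) ->
  forall f, (exists N (c : nat -> K), f = \sum_(1 <= n < N) kc (c n) * F n) <-> in_ksQ f.
Proof.
move=> hP FE f; split => [[N [c ->]]|[q ->]]; first by rewrite (sum_peval_Q _ _ FE); eexists.
have [c qE] := monic_family_span hP (leqnn (size (- q))).
by exists (size (- q)).+1, (fun n => c n.-1); rewrite (sum_peval_Q _ _ FE) /= -qE opprK.
Qed.

Lemma in_O_ksQ f : in_O lam f <-> in_ksQ f.
Proof. exact: span_ksQ dickson2_monic_size Ow_dickson2 f. Qed.

Lemma uw_Xn_peval n : uw lam n.+1 = - peval 'X^n s * Q.
Proof. by rewrite uw_Xn pevalXn. Qed.

Lemma uw_span_ksQ f :
  (exists N (c : nat -> K), f = \sum_(1 <= n < N) kc (c n) * uw lam n) <-> in_ksQ f.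
Proof.
by apply: (span_ksQ (P := fun n => 'X^n)) uw_Xn_peval f => n; rewrite monicXn size_polyXn.
Qed.

Lemma uw_free N (c : nat -> K) :
  \sum_(1 <= n < N) kc (c n) * uw lam n = 0 -> forall n, (1 <= n < N)%N -> c n = 0.
Proof.
rewrite (sum_peval_Q _ _ uw_Xn_peval) => /eqP.
rewrite mulf_eq0 (negPf Q_neq0) orbF peval_slam_eq0 oppr_eq0 => /eqP cE n /andP [n1 nN].
have := congr1 (coefp n.-1) cE; rewrite /= coef0 coef_sum => <-.
under eq_bigr do rewrite coefZ coefXn mulr_natr mulrb eq_sym.
by rewrite -big_mkcond (big_ord1_eq _ (fun i => c i.+1)) ltn_predRL prednK // nN.
Qed.

Lemma ksQ_in_W f : in_ksQ f -> in_W f.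
Proof.
move=> [q ->]; have [H [HE _]] := slam_laurent q.
exists (H * q2), (size q).-1.
rewrite tofracM HE -Q_tofrac -(mulrA (t ^+ _)) (mulrC (t ^+ _)).
by rewrite (mulfK (expf_neq0 _ (tt_neq0 K))).
Qed.

Lemma ksQ_cov f : in_ksQ f <-> exists g, d4 %| g /\ f = cov lam g.
Proof.
split => [[q ->]|[g [/dvdpP [q ->] ->]]]; last by exists q; rewrite cov_mul_d4.
by exists (q * d4); rewrite dvdp_mulIr cov_mul_d4.
Qed.

Lemma ksQ_in_Ls f : in_ksQ f -> in_Ls s f.
Proof.
move=> fQ; split; first exact: ksQ_in_W.
by have [g [_ ->]] := (ksQ_cov f).1 fQ; exists g.
Qed.

(* (a s + b)/s' = t R/(t^2 - lam) with R = a X^2 + b X + a lam = a (X^2 - lam) + b X + 2 a lam,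
   and X^2 - lam cannot divide the remainder b X + 2 a lam unless it vanishes. *)
Lemma in_W_affine_div_Dt (a b : K) : 2%:R != 0 :> K ->
  in_W ((kc a * s + kc b) / Dt s) -> a = 0 /\ b = 0.
Proof.
move=> two0 affW; pose R : {poly K} := a%:P * 'X^2 + b%:P * 'X + (a * lam)%:P.
have Rt : (kc a * s + kc b) * t ^+ 2 = R%:F * t.
  rewrite /R !tofracD !tofracM -[(a%:P)%:F]/(kc a) -[(b%:P)%:F]/(kc b) -['X%:F]/t.
  rewrite -[((a * lam)%:P)%:F]/(kc (a * lam)) rmorphM.
  transitivity ((kc a * (s * t) + kc b * t) * t); first by ring.
  by rewrite slam_mul_tt; ring.
have q2R : q2 %| R.
  apply: (@in_W_dvdp _ _ _ 1).
    by rewrite hornerD hornerN hornerXn hornerC expr0n add0r oppr_eq0.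
  by rewrite -Q_tofrac expr1 mulrAC -Rt -mulrA -invf_div -Dt_slam.
pose r := b%:P * 'X + (2%:R * a * lam)%:P.
have RE : R = a%:P * q2 + r by rewrite /R /r !polyCM; ring.
have r0 : r = 0.
  apply: contraTeq q2R => r_neq0; rewrite RE dvdp_addr ?dvdp_mull //.
  apply/negP => /(dvdp_leq r_neq0); rewrite size_XnsubC // /r size_MXaddC.
  by case: ifP => // _; rewrite ltnS size_polyC; case: (b != 0).
have := congr1 (coefp 0) r0; have := congr1 (coefp 1) r0.
rewrite /= !coefD !coefMX !coefC /= addr0 add0r => -> /eqP.
by rewrite !mulf_eq0 (negPf two0) (negPf lam0) orbF => /eqP.
Qed.

Lemma in_LsE : 2%:R != 0 :> K -> forall f, in_Ls s f <-> in_ksQ f.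
Proof.
move=> two0 f; split; last exact: ksQ_in_Ls.
move=> [fW [g fE]]; set r := g %% d4.
have d4_neq0 : d4 != 0 by rewrite monic_neq0 // monicXnsubC.
have sz_r : (size r <= 2)%N by have := ltn_modpN0 g d4_neq0; rewrite size_XnsubC.
have rE : r = (r`_1)%:P * 'X + (r`_0)%:P.
  apply/polyP => -[|[|i]]; rewrite coefD coefMX !coefC /= ?add0r ?addr0 //.
  by rewrite nth_default // (leq_trans sz_r).
have fE' : f = peval (g %/ d4) s * Q + (kc r`_1 * s + kc r`_0) / Dt s.
  rewrite fE {1}(divp_eq g d4) pevalD mulrDl -/(cov lam (g %/ d4 * d4)) cov_mul_d4 -/r.
  by rewrite {1}rE pevalD pevalM pevalX !pevalC.
have [r1 r0] : r`_1 = 0 /\ r`_0 = 0.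
  apply: in_W_affine_div_Dt two0 _.
  have -> : (kc r`_1 * s + kc r`_0) / Dt s = f - peval (g %/ d4) s * Q.
    by rewrite fE' addrAC subrr add0r.
  by apply: in_WB fW (ksQ_in_W _); exists (g %/ d4).
by exists (g %/ d4); rewrite fE' r1 r0 !rmorph0 mul0r add0r mul0r addr0.
Qed.

Lemma covD p q : cov lam (p + q) = cov lam p + cov lam q.
Proof. by rewrite /cov pevalD mulrDl. Qed.

Lemma covN p : cov lam (- p) = - cov lam p.
Proof. by rewrite /cov pevalN mulNr. Qed.

Lemma covZ c p : cov lam (c *: p) = kc c * cov lam p.
Proof. by rewrite /cov pevalZ mulrA. Qed.

Lemma cov_wbr p q : cov lam (p * q^`() - p^`() * q) = wbr (cov lam p) (cov lam q).
Proof. by rewrite /cov wbr_peval_div. Qed.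

Lemma cov_inj : injective (cov lam).
Proof.
move=> p q /(mulIf (invr_neq0 Dt_slam_neq0)) /eqP.
by rewrite -subr_eq0 -pevalN -pevalD peval_slam_eq0 subr_eq0 => /eqP.
Qed.

Lemma uw_cov n : uw lam n.+1 = cov lam (- ('X^n * d4)).
Proof. by rewrite uw_Xn covN cov_mul_d4 pevalXn mulNr. Qed.

Lemma uw_bracket n m : (1 <= n)%N -> (1 <= m)%N ->
  wbr (uw lam n) (uw lam m) =
  ((n%:Z - m%:Z)%:~R : RF K) * (uw lam (n + m) - kc (4%:R * lam) * uw lam (n + m - 2)).
Proof.
case: n m => [//|a] [//|b] _ _.
have [ab0|ab_gt0] := posnP (a + b).
  move/eqP: ab0; rewrite addn_eq0 => /andP [/eqP -> /eqP ->].
  by rewrite subrr mul0r /wbr mulrC subrr.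
have [c abc] : exists c, (a + b)%N = c.+1 by exists (a + b).-1; rewrite prednK.
rewrite addSn addnS abc subn2 /= !uw_cov -cov_wbr.
rewrite -(rmorph_int (@kc K)) -covZ -covN -covD -covZ; congr (cov lam _).
rewrite !derivN !mulrNN (deriv_bracket_Xn _ abc) -!mul_polyC intrB.
have -> : 'X^(c.+2) = 'X^c * 'X^2 :> {poly K} by rewrite -exprD addn2.
by ring.
Qed.

End Slam.

Theorem theorem4p16 (K : fieldType) (charK0 : [pchar K] =i pred0)
    (lam : K) (lam_neq0 : lam != 0) :
  let s := slam lam in
  (* O(lambda) = L(s_lambda) *)
  (forall f, in_O lam f <-> in_Ls s f) /\
  (* L(s_lambda) = k[t + lambda t^{-1}] (t^2 - lambda) d *)
  (forall f, in_Ls s f <-> exists q : {poly K}, f = peval q s * (tt K ^+ 2 - kc lam)) /\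
  (* ... = k[s] (s^2 - 4 lambda) d_s *)
  (forall f, in_Ls s f <->
     exists q : {poly K}, f = peval q s * (s ^+ 2 - kc (4%:R * lam)) / Dt s) /\
  (* O(lambda) ~= (t^2 - 4 lambda) k[t] d, via the change of variables s |-> t *)
  ((forall g1 g2 : {poly K}, cov lam (g1 + g2) = cov lam g1 + cov lam g2) /\
   (forall (c : K) (g : {poly K}), cov lam (c *: g) = kc c * cov lam g) /\
   (forall g1 g2 : {poly K},
       cov lam (g1 * g2^`() - g1^`() * g2) = wbr (cov lam g1) (cov lam g2)) /\
   (forall g1 g2 : {poly K}, cov lam g1 = cov lam g2 -> g1 = g2) /\
   (forall f, in_O lam f <->
      exists g : {poly K}, ('X ^+ 2 - (4%:R * lam)%:P) %| g /\ f = cov lam g)) /\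
  (* the basis u_n *)
  (forall n : nat, (1 <= n)%N ->
      uw lam n = - (s ^+ n.-1) * (s ^+ 2 - kc (4%:R * lam)) / Dt s /\
      uw lam n = - (s ^+ n.-1) * (tt K ^+ 2 - kc lam)) /\
  (forall f, in_O lam f <->
      exists (N : nat) (c : nat -> K), f = \sum_(1 <= n < N) kc (c n) * uw lam n) /\
  (forall (N : nat) (c : nat -> K),
      \sum_(1 <= n < N) kc (c n) * uw lam n = 0 ->
      forall n, (1 <= n < N)%N -> c n = 0) /\
  (forall n m : nat, (1 <= n)%N -> (1 <= m)%N ->
      wbr (uw lam n) (uw lam m) =
      ((n%:Z - m%:Z)%:~R : RF K) * (uw lam (n + m) - kc (4%:R * lam) * uw lam (n + m - 2))).
Proof.
move=> s; have two0 : 2%:R != 0 :> K by rewrite ((pcharf0P K).1 charK0).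
have LsE := in_LsE lam_neq0 two0; have OE := in_O_ksQ lam.
split; first by move=> f; rewrite OE LsE.
split; first by move=> f; rewrite LsE.
split; first by move=> f; rewrite LsE; split=> -[q ->]; exists q; rewrite mul_sqr_sub4_div.
split.
  split; first exact: covD.
  split; first exact: covZ.
  split; first exact: cov_wbr.
  split; first exact: cov_inj.
  by move=> f; rewrite OE ksQ_cov.
split; first by case=> [//|n] _; rewrite mul_sqr_sub4_div; split; exact: uw_Xn.
split; first by move=> f; rewrite OE uw_span_ksQ.
split; first exact: uw_free.
exact: uw_bracket.
Qed.
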